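(* Let $k\ge1$ and $n=2^k-1$, let $1\le r<n$, and let $\mathsf{X}\in\mathbb{R}^{n\times r}$ have unit-norm, linearly independent columns. With the notation of the context, define $$C=-(I^{\otimes k}\otimes\mathcal{C}_{\mathsf{X}})(I^{\otimes k}\otimes S_0)(I^{\otimes k}\otimes\mathcal{C}_{\mathsf{X}}^* )\,V^*\big(O(r)\otimes I^{\otimes n}\big)V.$$ Then, with $|\psi\rangle=|\mathrm{columns}(\mathsf{X})\rangle$, $$C\big(|0\rangle^{\otimes k}\otimes|\psi\rangle\big)=|0\rangle^{\otimes k}\otimes Q|\psi\rangle,$$ where $Q=-\mathcal{C}_{\mathsf{X}}S_0\mathcal{C}_{\mathsf{X}}^*S_r$.
   Context: Fermionic operators on $(\mathbb{C}^2)^{\otimes n}$ are $c_j=\sigma_z^{\otimes(j-1)}\otimes|0\rangle\langle1|\otimes I^{\otimes(n-j)}$, with $\sigma_z=\mathrm{diag}(1,-1)$. The vacuum is $|\emptyset\rangle=|0\cdots0\rangle$. For a unit $x\in\mathbb{R}^n$, set $\mathcal{C}(x)=\sum_ix_i(c_i+c_i^* )$. Put $\mathcal{C}_{\mathsf{X}}=\mathcal{C}(\mathsf{X}_{:1})\cdots\mathcal{C}(\mathsf{X}_{:r})$ and $|\mathrm{columns}(\mathsf{X})\rangle=\mathcal{C}_{\mathsf{X}}|\emptyset\rangle$. For $t\in\{0,\dots,n\}$, $P_t$ projects onto the span of computational basis states of Hamming weight $t$. Let $S_0=\mathbb{I}-2P_0$ and $S_r=\mathbb{I}-2P_r$. A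 control register of $k$ qubits is added. For $s=\sum_{\ell=0}^{k-1}s_\ell2^\ell$, set $|\mathrm{bin}(s)\rangle=|s_0\cdots s_{k-1}\rangle$. Let $U_s=\sum_{t=0}^ne^{2\mathrm{i}\pi ts/(n+1)}P_t$. $\mathrm{CU}_m$ ($m=1,\dots,k$) applies $U_{2^{m-1}}$ to the system register controlled on the $m$-th control qubit being $|1\rangle$. $H$ is the Hadamard gate. $\mathrm{IQFT}|\mathrm{bin}(y)\rangle=(n+1)^{-1/2}\sum_{z=0}^ne^{-2\mathrm{i}\pi yz/(n+1)}|\mathrm{bin}(z)\rangle$. Then $V=(\mathrm{IQFT}\otimes I^{\otimes n})(\prod_{m=1}^k\mathrm{CU}_m)(H^{\otimes k}\otimes I^{\otimes n})$. Finally $O(r)=(\sigma_x^{1-r_0}\otimes\cdots\otimes\sigma_x^{1-r_{k-1}})\mathrm{CZ}_k(\sigma_x^{1-r_0}\otimes\cdots\otimes\sigma_x^{1-r_{k-1}})$, where $r=\sum_\ell r_\ell2^\ell$ and $\mathrm{CZ}_k$ negates $|1\rangle^{\otimes k}$ and fixes all other basis states. *)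

(* complex numbers R[i] (mathcomp-real-closed) over an
   arbitrary R : realType (mathcomp-analysis, for pi / sin / cos),
   matrices from mathcomp, Kronecker product [tensmx] from real_closed/mxtens
   (index convention: (i,j) |-> i * n + j, i.e. the first factor is the most
   significant / leftmost qubit, as in the usual Kronecker convention). *)
From mathcomp Require Import all_boot all_algebra.
From mathcomp Require Import complex mxtens.
From mathcomp Require Import reals trigo.
Set Implicit Arguments. Unset Strict Implicit. Unset Printing Implicit Defensive.
Import GRing.Theory Num.Theory.
Local Open Scope ring_scope.
Local Open Scope complex_scope.

Section Defs.
Variable R : realType.
Local Notation C := R[i].

Definition adj {m p : nat} (A : 'M[C]_(m, p)) : 'M[C]_(p, m) := map_mx conjc A^T.

Definition qI : 'M[C]_2 := 1%:M.
Definition sigz : 'M[C]_2 := \matrix_(i, j) ((i == j)%:R * (if (i : nat) == 0 then 1 else -1)).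
Definition sigx : 'M[C]_2 := \matrix_(i, j) (i != j)%:R.
Definition ket0bra1 : 'M[C]_2 := \matrix_(i, j) (((i : nat) == 0) && ((j : nat) == 1))%:R.
Definition hadamard : 'M[C]_2 :=
  \matrix_(i, j) (((Num.sqrt (2 : R))^-1)%:C * (if ((i : nat) == 1) && ((j : nat) == 1) then -1 else 1)).
Definition ket1q (b : bool) : 'cV[C]_2 := \col_i (((i : nat) == b)%:R).

Fixpoint tprod (m : nat) (f : nat -> 'M[C]_2) {struct m} : 'M[C]_(2 ^ m) :=
  match m return 'M[C]_(2 ^ m) with
  | 0 => 1%:M
  | m'.+1 => castmx (esym (expnS 2 m'), esym (expnS 2 m'))
                    (f 0 *t tprod m' (fun i => f i.+1))
  end.

Fixpoint tket (m : nat) (b : nat -> bool) {struct m} : 'cV[C]_(2 ^ m) :=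
  match m return 'cV[C]_(2 ^ m) with
  | 0 => 1%:M
  | m'.+1 => castmx (esym (expnS 2 m'), muln1 1)
                    (ket1q (b 0) *t tket m' (fun i => b i.+1))
  end.

Definition idm (m : nat) : 'M[C]_(2 ^ m) := 1%:M.

Definition vac (m : nat) : 'cV[C]_(2 ^ m) := tket m (fun _ => false).

(* fermionic annihilation operator c_{j+1} on n qubits (j 0-based) *)
Definition cop (n : nat) (j : nat) : 'M[C]_(2 ^ n) :=
  tprod n (fun i => if (i < j)%N then sigz else if i == j then ket0bra1 else qI).

Definition Ccal (n : nat) (x : 'cV[R]_n) : 'M[C]_(2 ^ n) :=
  \sum_(i < n) (x i 0)%:C *: (cop n i + adj (cop n i)).

Definition CX (n r : nat) (X : 'M[R]_(n, r)) : 'M[C]_(2 ^ n) :=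
  \big[@mulmx C _ _ _ / idm n]_(j < r) Ccal (col j X).

Definition columns (n r : nat) (X : 'M[R]_(n, r)) : 'cV[C]_(2 ^ n) := CX X *m vac n.

Definition Pw (n t : nat) : 'M[C]_(2 ^ n) :=
  \sum_(b : n.-tuple bool | count id b == t)
     (tket n (nth false b) *m adj (tket n (nth false b))).

Definition Sw (n t : nat) : 'M[C]_(2 ^ n) := idm n - 2%:R *: Pw n t.

Definition expi (theta : R) : C := cos theta +i* sin theta.

Definition Us (n s : nat) : 'M[C]_(2 ^ n) :=
  \sum_(t < n.+1) expi (2 * pi * (t * s)%:R / (n.+1)%:R) *: Pw n t.

Definition bin (k s : nat) : 'cV[C]_(2 ^ k) := tket k (fun l => odd (s %/ 2 ^ l)).

Definition ctrlproj (k : nat) (m : nat) (b : bool) : 'M[C]_(2 ^ k) :=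
  tprod k (fun i => if i == m then ket1q b *m adj (ket1q b) else qI).

(* CU_{m+1}: U_{2^m} on the system controlled on control qubit m+1 *)
Definition CU (k n m : nat) : 'M[C]_(2 ^ k * 2 ^ n) :=
  ctrlproj k m false *t idm n + ctrlproj k m true *t Us n (2 ^ m).

Definition IQFT (k n : nat) : 'M[C]_(2 ^ k) :=
  \sum_(y < n.+1) \sum_(z < n.+1)
     (((Num.sqrt (n.+1)%:R : R)^-1)%:C * expi (- (2 * pi * (y * z)%:R / (n.+1)%:R)))
       *: (bin k z *m adj (bin k y)).

Definition Vop (k n : nat) : 'M[C]_(2 ^ k * 2 ^ n) :=
  (IQFT k n *t idm n)
  *m (\big[@mulmx C _ _ _ / idm k *t idm n]_(m < k) CU k n m)
  *m (tprod k (fun _ => hadamard) *t idm n).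

Definition CZ (k : nat) : 'M[C]_(2 ^ k) :=
  idm k - 2%:R *: (tket k (fun _ => true) *m adj (tket k (fun _ => true))).

Definition Xflip (k r : nat) : 'M[C]_(2 ^ k) :=
  tprod k (fun l => if odd (r %/ 2 ^ l) then qI else sigx).

Definition Oop (k r : nat) : 'M[C]_(2 ^ k) := Xflip k r *m CZ k *m Xflip k r.

Definition Cop (k n r : nat) (X : 'M[R]_(n, r)) : 'M[C]_(2 ^ k * 2 ^ n) :=
  - ((idm k *t CX X) *m (idm k *t Sw n 0) *m (idm k *t adj (CX X))
     *m adj (Vop k n) *m (Oop k r *t idm n) *m Vop k n).

Definition Qop (n r : nat) (X : 'M[R]_(n, r)) : 'M[C]_(2 ^ n) :=
  - (CX X *m Sw n 0 *m adj (CX X) *m Sw n r).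

End Defs.

(* Expand the state in the computational basis |b⟩, and write |b| for the
   Hamming weight of b.  The phase estimation circuit V maps |0…0⟩ ⊗ |b⟩ to
   |bin |b|⟩ ⊗ |b⟩: the Hadamard layer prepares the uniform superposition of
   the |bin y⟩, the controlled powers U_{2^m} multiply |bin y⟩ ⊗ |b⟩ by
   e^{2iπ|b|y/(n+1)}, and since n + 1 = 2^k the inverse Fourier transform
   concentrates the control register on |bin |b|⟩.  The oracle O(r) negates
   |bin t⟩ exactly when t = r and V† undoes V on these states, so
   V† (O(r) ⊗ I) V acts on |0…0⟩ ⊗ |ψ⟩ as I ⊗ S_r.  Composing with
   -(I ⊗ C_X S_0 C_X†) gives |0…0⟩ ⊗ Q|ψ⟩. *)

From mathcomp Require Import all_boot all_algebra.
From mathcomp Require Import complex mxtens.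
From mathcomp Require Import reals trigo.
From mathcomp Require Import ring lra.
Import GRing.Theory Num.Theory.
Local Open Scope ring_scope.
Local Open Scope complex_scope.
Set Implicit Arguments. Unset Strict Implicit. Unset Printing Implicit Defensive.

Section CastTensor.
Variable R : pzRingType.

Lemma mulmx_castmx p q r p' q' r' (e1 : p = p') (e2 : q = q') (e3 : r = r')
    (A : 'M[R]_(p, q)) (B : 'M[R]_(q, r)) :
  castmx (e1, e2) A *m castmx (e2, e3) B = castmx (e1, e3) (A *m B).
Proof. by case: p' / e1; case: q' / e2; case: r' / e3; rewrite !castmx_id. Qed.

Lemma castmxZ p q p' q' (e1 : p = p') (e2 : q = q') a (A : 'M[R]_(p, q)) :
  castmx (e1, e2) (a *: A) = a *: castmx (e1, e2) A.
Proof. by case: p' / e1; case: q' / e2; rewrite !castmx_id. Qed.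

Lemma castmxD p q p' q' (e1 : p = p') (e2 : q = q') (A B : 'M[R]_(p, q)) :
  castmx (e1, e2) (A + B) = castmx (e1, e2) A + castmx (e1, e2) B.
Proof. by case: p' / e1; case: q' / e2; rewrite !castmx_id. Qed.

Lemma castmx_sum p q p' q' (e1 : p = p') (e2 : q = q') I (s : seq I)
    (F : I -> 'M[R]_(p, q)) :
  castmx (e1, e2) (\sum_(i <- s) F i) = \sum_(i <- s) castmx (e1, e2) (F i).
Proof.
by case: p' / e1; case: q' / e2; rewrite castmx_id; apply: eq_bigr => i _; rewrite castmx_id.
Qed.

Lemma castmx1 p p' (e : p = p') : castmx (e, e) (1%:M : 'M[R]_p) = 1%:M.
Proof. by case: p' / e; rewrite castmx_id. Qed.

Lemma tensmxDl m n p q (A B : 'M[R]_(m, n)) (D : 'M[R]_(p, q)) :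
  (A + B) *t D = A *t D + B *t D.
Proof. by apply/matrixP=> i j; rewrite !mxE mulrDl. Qed.

Lemma tensmxDr m n p q (A : 'M[R]_(m, n)) (B D : 'M[R]_(p, q)) :
  A *t (B + D) = A *t B + A *t D.
Proof. by apply/matrixP=> i j; rewrite !mxE mulrDr. Qed.

Lemma tensmxZl m n p q a (A : 'M[R]_(m, n)) (D : 'M[R]_(p, q)) :
  (a *: A) *t D = a *: (A *t D).
Proof. by apply/matrixP=> i j; rewrite !mxE mulrA. Qed.

Lemma tensmx_suml m n p q I (s : seq I) (F : I -> 'M[R]_(m, n)) (D : 'M[R]_(p, q)) :
  (\sum_(i <- s) F i) *t D = \sum_(i <- s) F i *t D.
Proof. by elim/big_rec2: _ => [|i B E _ <-]; rewrite ?tens0mx ?tensmxDl. Qed.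

Lemma tensmx_sumr m n p q I (s : seq I) (A : 'M[R]_(m, n)) (F : I -> 'M[R]_(p, q)) :
  A *t (\sum_(i <- s) F i) = \sum_(i <- s) A *t F i.
Proof. by elim/big_rec2: _ => [|i B E _ <-]; rewrite ?tensmx0 ?tensmxDr. Qed.

Lemma tensmx11 m n : (1%:M : 'M[R]_m) *t (1%:M : 'M[R]_n) = 1%:M.
Proof.
apply/matrixP=> i j.
case: (mxtens_indexP i) => i0 i1; case: (mxtens_indexP j) => j0 j1.
rewrite tensmxE !mxE -natrM (inj_eq (can_inj (@mxtens_indexK _ _))).
by rewrite xpair_eqE mulnb.
Qed.

Lemma tens_scalar_mx11 (a b : R) :
  castmx (muln1 1, muln1 1) ((a%:M : 'M[R]_1) *t (b%:M : 'M[R]_1)) = (a * b)%:M.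
Proof. by apply/matrixP=> i j; rewrite !ord1 castmxE !mxE /= !mulr1n. Qed.

End CastTensor.

Lemma tensmxZr (R : comPzRingType) m n p q a (A : 'M[R]_(m, n)) (D : 'M[R]_(p, q)) :
  A *t (a *: D) = a *: (A *t D).
Proof. by apply/matrixP=> i j; rewrite !mxE mulrCA. Qed.

Lemma tensmxNr (R : comPzRingType) m n p q (A : 'M[R]_(m, n)) (D : 'M[R]_(p, q)) :
  A *t (- D) = - (A *t D).
Proof. by rewrite -scaleN1r tensmxZr scaleN1r. Qed.

Lemma sum_ord_delta (R : pzRingType) (V : lmodType R) N j (F : nat -> V) : (j < N)%N ->
  \sum_(i < N) (i == j :> nat)%:R *: F i = F j.
Proof.
move=> j_lt; rewrite (bigD1 (Ordinal j_lt)) //= eqxx scale1r big1 ?addr0 // => i.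
by rewrite -val_eqE /= => /negbTE ->; rewrite scale0r.
Qed.

Lemma reflection_eigen (R : pzRingType) N (P : 'M[R]_N) (v : 'cV[R]_N) (b : bool) :
  P *m v = b%:R *: v -> (1%:M - 2%:R *: P) *m v = (if b then -1 else 1) *: v.
Proof.
move=> Pv; rewrite mulmxBl mul1mx -scalemxAl Pv scalerA.
case: {Pv} b; last by rewrite mulr0 scale0r subr0 scale1r.
by rewrite mulr1 -{1}[v]scale1r -scalerBl mulr2n opprD addrA subrr add0r.
Qed.

Lemma mulmx_big_eigen (R : comPzRingType) N I (s : seq I) (I0 : 'M[R]_N)
    (F : I -> 'M[R]_N) (c : I -> R) (v : 'cV[R]_N) :
  I0 *m v = v -> (forall i, F i *m v = c i *: v) ->
  (\big[@mulmx R N N N / I0]_(i <- s) F i) *m v = (\prod_(i <- s) c i) *: v.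
Proof.
move=> I0v Fv; elim: s => [|x s IH]; first by rewrite !big_nil scale1r.
by rewrite !big_cons -mulmxA IH -scalemxAr Fv scalerA mulrC.
Qed.

Lemma half_lt_pow2 m y : (y < 2 ^ m.+1)%N -> (y./2 < 2 ^ m)%N.
Proof. by rewrite ltn_half_double -mul2n -expnS. Qed.

Lemma sum_pow2S (V : nmodType) m (F : nat -> V) :
  \sum_(y < 2 ^ m.+1) F y = \sum_(y < 2 ^ m) (F y.*2 + F y.*2.+1).
Proof.
rewrite -(big_mkord xpredT F) -(big_mkord xpredT (fun y => F y.*2 + F y.*2.+1)).
rewrite expnS mul2n; elim: (2 ^ m)%N => [|j IH]; first by rewrite !big_geq.
by rewrite doubleS !big_nat_recr //= IH addrA.
Qed.

Lemma binary_expansion k y : (y < 2 ^ k)%N -> y = (\sum_(m < k) odd (y %/ 2 ^ m) * 2 ^ m)%N.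
Proof.
elim: k y => [|k IH] y y_lt; first by move: y_lt; rewrite ltnS leqn0 big_ord0 => /eqP.
rewrite big_ord_recl /= expn0 divn1 muln1.
under eq_bigr => i _ do rewrite /bump /= add1n expnS divnMA divn2 mulnCA.
rewrite -big_distrr /= -IH; last exact: half_lt_pow2.
by rewrite -[y in LHS]odd_double_half -muln2 mulnC.
Qed.

Lemma count_tuple_lt n (b : n.-tuple bool) : (count id b < n.+1)%N.
Proof. by rewrite ltnS -[X in (_ <= X)%N](size_tuple b) count_size. Qed.

Lemma sum_tupleS (V : nmodType) n (F : n.+1.-tuple bool -> V) :
  \sum_(b : n.+1.-tuple bool) F b = \sum_(x : bool) \sum_(b : n.-tuple bool) F (cons_tuple x b).
Proof.
rewrite pair_big /= (reindex (fun p : bool * n.-tuple bool => cons_tuple p.1 p.2)) //=.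
exists (fun b : n.+1.-tuple bool => (thead b, behead_tuple b)).
  by move=> [x b] _ /=; rewrite theadE; congr pair; apply: val_inj.
by move=> b _ /=; rewrite [in RHS](tuple_eta b); apply: val_inj.
Qed.

Section Adjoint.
Variable R : realType.
Local Notation C := R[i].

Lemma hadjM m n p (A : 'M[C]_(m, n)) (B : 'M[C]_(n, p)) : adj (A *m B) = adj B *m adj A.
Proof. by rewrite /adj trmx_mul map_mxM. Qed.

Lemma hadj0 m n : adj (0 : 'M[C]_(m, n)) = 0.
Proof. by rewrite /adj trmx0 map_mx0. Qed.

Lemma hadjD m n (A B : 'M[C]_(m, n)) : adj (A + B) = adj A + adj B.
Proof. by rewrite /adj linearD map_mxD. Qed.

Lemma hadjZ m n a (A : 'M[C]_(m, n)) : adj (a *: A) = a^*%C *: adj A.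
Proof. by apply/matrixP=> i j; rewrite !mxE rmorphM. Qed.

Lemma hadj_sum m n I (s : seq I) (P : pred I) (F : I -> 'M[C]_(m, n)) :
  adj (\sum_(i <- s | P i) F i) = \sum_(i <- s | P i) adj (F i).
Proof. exact: (big_morph _ (@hadjD m n) (hadj0 m n)). Qed.

Lemma hadjK m n (A : 'M[C]_(m, n)) : adj (adj A) = A.
Proof. by apply/matrixP=> i j; rewrite !mxE conjcK. Qed.

Lemma hadj1 m : adj (1%:M : 'M[C]_m) = 1%:M.
Proof. by rewrite /adj trmx1 map_mx1. Qed.

Lemma hadjT m n p q (A : 'M[C]_(m, n)) (B : 'M[C]_(p, q)) : adj (A *t B) = adj A *t adj B.
Proof. by rewrite /adj trmx_tens map_mxT. Qed.

Lemma hadj_castmx p q p' q' (e1 : p = p') (e2 : q = q') (A : 'M[C]_(p, q)) :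
  adj (castmx (e1, e2) A) = castmx (e2, e1) (adj A).
Proof. by case: p' / e1; case: q' / e2; rewrite !castmx_id. Qed.

End Adjoint.

Section TensorProducts.
Variable R : realType.
Local Notation C := R[i].

Lemma tprodS m (f : nat -> 'M[C]_2) : tprod m.+1 f =
  castmx (esym (expnS 2 m), esym (expnS 2 m)) (f 0%N *t tprod m (fun i => f i.+1)).
Proof. by []. Qed.

Lemma tketS m (b : nat -> bool) : tket R m.+1 b =
  castmx (esym (expnS 2 m), muln1 1) (ket1q R (b 0%N) *t tket R m (fun i => b i.+1)).
Proof. by []. Qed.

Lemma eq_tprod m (f g : nat -> 'M[C]_2) : f =1 g -> tprod m f = tprod m g.
Proof.
elim: m f g => [|m IH] f g fg //.
by rewrite !tprodS fg (IH _ (fun i => g i.+1)).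
Qed.

Lemma eq_tket m (c d : nat -> bool) : {in gtn m, c =1 d} -> tket R m c = tket R m d.
Proof.
elim: m c d => [|m IH] c d cd //.
by rewrite !tketS cd // (IH _ (fun i => d i.+1)) // => i i_lt; apply: cd.
Qed.

Lemma tprod_mul m (f g : nat -> 'M[C]_2) :
  tprod m f *m tprod m g = tprod m (fun i => f i *m g i).
Proof.
elim: m f g => [|m IH] f g; first by rewrite mul1mx.
by rewrite !tprodS mulmx_castmx tensmx_mul IH.
Qed.

Lemma tprod_id m (f : nat -> 'M[C]_2) : (forall i, f i = 1%:M) -> tprod m f = 1%:M.
Proof.
elim: m f => [|m IH] f f1 //.
by rewrite tprodS f1 IH // tensmx11 castmx1.
Qed.

Lemma hadj_tprod m (f : nat -> 'M[C]_2) : adj (tprod m f) = tprod m (fun i => adj (f i)).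
Proof.
elim: m f => [|m IH] f; first exact: hadj1.
by rewrite !tprodS hadj_castmx hadjT IH.
Qed.

Lemma tprod_tket m (f : nat -> 'M[C]_2) (c d : nat -> bool) (a : nat -> C) :
  (forall i, (i < m)%N -> f i *m ket1q R (c i) = a i *: ket1q R (d i)) ->
  tprod m f *m tket R m c = (\prod_(i < m) a i) *: tket R m d.
Proof.
elim: m f c d a => [|m IH] f c d a fcd; first by rewrite big_ord0 scale1r mul1mx.
rewrite tprodS !tketS mulmx_castmx tensmx_mul fcd //.
rewrite (IH _ _ (fun i => d i.+1) (fun i => a i.+1)); last by move=> i i_lt; apply: fcd.
by rewrite tensmxZl tensmxZr scalerA castmxZ big_ord_recl.
Qed.

Lemma ket1q_inner (b b' : bool) : adj (ket1q R b) *m ket1q R b' = ((b == b')%:R : C)%:M.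
Proof.
apply/matrixP=> i j; rewrite !ord1 !mxE big_ord_recl big_ord1 !mxE /=.
by case: b; case: b'; rewrite /bump /=; simpc.
Qed.

Lemma tket_inner m (c d : nat -> bool) :
  adj (tket R m c) *m tket R m d = (\prod_(i < m) ((c i == d i)%:R : C))%:M.
Proof.
elim: m c d => [|m IH] c d; first by rewrite big_ord0 hadj1 mul1mx.
rewrite !tketS hadj_castmx hadjT mulmx_castmx tensmx_mul ket1q_inner IH.
by rewrite tens_scalar_mx11 big_ord_recl.
Qed.

End TensorProducts.

Section BinaryKets.
Variable R : realType.
Local Notation C := R[i].

Lemma binS m s : bin R m.+1 s =
  castmx (esym (expnS 2 m), muln1 1) (ket1q R (odd s) *t bin R m s./2).
Proof.
rewrite /bin tketS expn0 divn1; congr (castmx _ (_ *t _)).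
by apply: eq_tket => i _; rewrite expnS divnMA divn2.
Qed.

Lemma bin_inner m z y : (z < 2 ^ m)%N -> (y < 2 ^ m)%N ->
  adj (bin R m z) *m bin R m y = ((z == y)%:R : C)%:M.
Proof.
elim: m z y => [|m IH] z y.
  by rewrite !ltnS !leqn0 => /eqP -> /eqP ->; rewrite hadj1 mul1mx.
move=> /half_lt_pow2 z_lt /half_lt_pow2 y_lt.
rewrite !binS hadj_castmx hadjT mulmx_castmx tensmx_mul ket1q_inner IH //.
rewrite tens_scalar_mx11 -natrM mulnb; congr ((nat_of_bool _)%:R%:M).
apply/andP/eqP => [[/eqP z2 /eqP y2]|-> //].
by rewrite -[z]odd_double_half -[y]odd_double_half z2 y2.
Qed.

Definition rsqrtc (N : nat) : C := ((Num.sqrt (N%:R : R))^-1)%:C.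

Lemma rsqrtcM a b : rsqrtc (a * b) = rsqrtc a * rsqrtc b.
Proof. by rewrite /rsqrtc natrM sqrtrM ?ler0n // invfM rmorphM. Qed.

Lemma rsqrtc_sqr N : (0 < N)%N -> rsqrtc N * rsqrtc N * N%:R = 1.
Proof.
move=> N_gt0; rewrite /rsqrtc -rmorphM -invfM -expr2 sqr_sqrtr ?ler0n //.
rewrite -(rmorph_nat (real_complex R)) -rmorphM mulVf ?rmorph1 //.
by rewrite pnatr_eq0 -lt0n.
Qed.

Lemma hadamard_ket0 :
  hadamard R *m ket1q R false = rsqrtc 2 *: (ket1q R false + ket1q R true).
Proof.
apply/matrixP=> i j; rewrite !ord1 !mxE big_ord_recl big_ord1 !mxE /bump /=.
by case: i => [[|[|i]] ?] //=; rewrite /rsqrtc; simpc.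
Qed.

Lemma hadamardK : hadamard R *m hadamard R = 1%:M.
Proof.
have inv_sqrt2 : (Num.sqrt (2 : R))^-1 * (Num.sqrt 2)^-1 = 2^-1.
  by rewrite -invfM -expr2 sqr_sqrtr // ler0n.
apply/matrixP=> i j; rewrite !mxE big_ord_recl big_ord1 !mxE /bump /=.
case: i => [[|[|i]] ?] //=; case: j => [[|[|j]] ?] //=; simpc => //.
all: rewrite inv_sqrt2; apply/eqP; rewrite eq_complex /= eqxx andbT; apply/eqP.
all: by field.
Qed.

Lemma hadj_hadamard : adj (hadamard R) = hadamard R.
Proof.
apply/matrixP=> i j; rewrite !mxE.
by case: i => [[|[|i]] ?] //=; case: j => [[|[|j]] ?] //=; simpc.
Qed.

Lemma tprod_hadamard_vac m : tprod m (fun _ => hadamard R) *m vac R m =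
  rsqrtc (2 ^ m) *: \sum_(y < 2 ^ m) bin R m y.
Proof.
elim: m => [|m IH].
  by rewrite big_ord1 /rsqrtc sqrtr1 invr1 scale1r mul1mx.
rewrite tprodS /vac tketS mulmx_castmx tensmx_mul hadamard_ket0 IH sum_pow2S.
rewrite tensmxZl tensmxZr scalerA tensmxDl !tensmx_sumr -big_split castmxZ castmx_sum.
have -> : rsqrtc (2 ^ m.+1) = rsqrtc 2 * rsqrtc (2 ^ m) by rewrite expnS rsqrtcM.
congr (_ *: _); apply: eq_bigr => y _.
by rewrite castmxD !binS /= odd_double doubleK uphalf_double.
Qed.

End BinaryKets.

Section ComplexExponential.
Variable R : realType.
Local Notation C := R[i].

Lemma expi0 : expi (0 : R) = 1.
Proof. by rewrite /expi cos0 sin0. Qed.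

Lemma expiD (a b : R) : expi a * expi b = expi (a + b).
Proof. by rewrite /expi cosD sinD; simpc; congr (_ +i* _); ring. Qed.

Lemma expiJ (a : R) : (expi a)^*%C = expi (- a).
Proof. by rewrite /expi cosN sinN; simpc. Qed.

Lemma expiNK (a : R) : expi a * expi (- a) = 1.
Proof. by rewrite expiD subrr expi0. Qed.

Lemma expiX (a : R) n : expi a ^+ n = expi (a *+ n).
Proof.
elim: n => [|n IH]; first by rewrite expr0 mulr0n expi0.
by rewrite exprS IH expiD mulrS.
Qed.

Lemma prod_expi I (s : seq I) (g : I -> R) :
  \prod_(i <- s) expi (g i) = expi (\sum_(i <- s) g i).
Proof. by elim/big_rec2: _ => [|i x y _ ->]; rewrite ?expi0 ?expiD. Qed.

Lemma expi_2pi_nat (t : nat) : expi (2 * pi * t%:R) = 1 :> C.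
Proof.
have -> : 2 * pi * t%:R = 0 + (pi *+ 2) *+ t :> R by rewrite add0r -mulr_natr; ring.
by rewrite /expi (periodicn (@cosD2pi R)) (periodicn (@sinD2pi R)) cos0 sin0.
Qed.

Lemma expi_neq1 (th : R) : 0 < th < pi *+ 2 -> expi th != 1.
Proof.
move=> /andP [th_gt0 th_lt]; rewrite /expi eq_complex /= negb_and; apply/orP; left.
have sin_gt0 : 0 < sin (th / 2).
  by apply: sin_gt0_pi; move: th_lt; rewrite mulr2n; lra.
have : cos ((th / 2) *+ 2) = 1 - (sin (th / 2)) ^+ 2 *+ 2.
  by rewrite cos_mulr2n cos2sin2 !mulr2n; ring.
rewrite [th / 2 *+ 2]mulr2n -splitr => ->; apply/eqP; nra.
Qed.

Lemma expi_2pi_frac_inj (N t z : nat) : (t < N)%N -> (z < N)%N ->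
  expi (2 * pi * t%:R / N%:R) = expi (2 * pi * z%:R / N%:R) :> C -> t = z.
Proof.
wlog zt : t z / (z <= t)%N.
  move=> sym t_lt z_lt e; case/orP: (leq_total z t) => [zt|tz]; first exact: sym.
  by apply/esym/sym.
move=> t_lt z_lt e; apply/eqP; rewrite eqn_leq zt andbT leqNgt; apply/negP => lt_zt.
have N_gt0 : (0 < N%:R :> R) by rewrite ltr0n (leq_ltn_trans _ t_lt).
have : expi (2 * pi * (t - z)%:R / N%:R) != 1 :> C.
  have frac_lt : (t - z)%:R / N%:R < 1 :> R.
    by rewrite ltr_pdivrMr // mul1r ltr_nat (leq_ltn_trans (leq_subr _ _)).
  have frac_gt : 0 < (t - z)%:R / N%:R :> R by rewrite divr_gt0 // ltr0n subn_gt0.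
  have pi_gt0 := pi_gt0 R.
  by apply: expi_neq1; rewrite -mulrA mulr2n; apply/andP; split; nra.
by rewrite natrB // mulrBr mulrBl -expiD e expiNK eqxx.
Qed.

Lemma sum_expi_orthogonal (N t z : nat) : (t < N)%N -> (z < N)%N ->
  \sum_(y < N) expi (2 * pi * (t * y)%:R / N%:R) * expi (- (2 * pi * (y * z)%:R / N%:R))
  = (t == z)%:R * N%:R :> C.
Proof.
move=> t_lt z_lt; have N_gt0 : (0 < N)%N by apply: leq_ltn_trans t_lt.
pose a : R := 2 * pi * t%:R / N%:R; pose b : R := 2 * pi * z%:R / N%:R.
pose w := expi a * expi (- b).
have term_pow (y : nat) : expi (2 * pi * (t * y)%:R / N%:R) *
    expi (- (2 * pi * (y * z)%:R / N%:R)) = w ^+ y.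
  rewrite exprMn !expiX; congr (expi _ * expi _).
    by rewrite -[a *+ y]mulr_natr /a natrM !mulrA mulrAC.
  by rewrite -[(- b) *+ y]mulr_natr mulNr /b mulnC natrM !mulrA mulrAC.
under eq_bigr do rewrite term_pow.
have [tz|tz] := eqVneq t z.
  rewrite /w /b -tz -/a expiNK mul1r; under eq_bigr do rewrite expr1n.
  by rewrite sumr_const card_ord.
rewrite mul0r; apply/eqP.
have wN : w ^+ N = 1.
  have full_turn c : (2 * pi * c / N%:R) *+ N = 2 * pi * c :> R.
    by rewrite -mulr_natr divfK // pnatr_eq0 -lt0n.
  by rewrite exprMn !expiX mulNrn /a /b !full_turn -expiJ !expi_2pi_nat conjc1 mulr1.
have w_neq1 : w != 1.
  apply: contra tz => /eqP w1; apply/eqP/(expi_2pi_frac_inj t_lt z_lt).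
  have -> : expi a = w * expi b by rewrite /w -mulrA (mulrC (expi (- b))) expiNK mulr1.
  by rewrite w1 mul1r.
by have := subrX1 w N; rewrite wN subrr => /esym/eqP; rewrite mulf_eq0 subr_eq0 (negbTE w_neq1).
Qed.

End ComplexExponential.

Section ComputationalBasis.
Variable R : realType.
Local Notation C := R[i].

Definition basis_ket n (b : n.-tuple bool) : 'cV[C]_(2 ^ n) := tket R n (nth false b).

Lemma basis_ket_cons n x (b : n.-tuple bool) :
  basis_ket (cons_tuple x b) = castmx (esym (expnS 2 n), muln1 1) (ket1q R x *t basis_ket b).
Proof. by rewrite /basis_ket tketS. Qed.

Lemma ket1q_complete : \sum_(x : bool) ket1q R x *m adj (ket1q R x) = 1%:M.
Proof.
rewrite big_bool; apply/matrixP=> i j; rewrite !mxE !big_ord1 !mxE.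
by case: i => [[|[|i]] ?] //=; case: j => [[|[|j]] ?] //=; simpc.
Qed.

Lemma basis_ket_complete n : \sum_(b : n.-tuple bool) basis_ket b *m adj (basis_ket b) = 1%:M.
Proof.
elim: n => [|n IH].
  rewrite (big_pred1 [tuple]) => [|b]; last by apply/esym/eqP/val_inj; rewrite /= (tuple0 b).
  by rewrite /basis_ket hadj1 mul1mx.
rewrite sum_tupleS.
under eq_bigr => x _ do under eq_bigr => b _ do
  rewrite basis_ket_cons hadj_castmx hadjT mulmx_castmx tensmx_mul.
under eq_bigr => x _ do rewrite -castmx_sum -tensmx_sumr IH.
by rewrite -castmx_sum -tensmx_suml ket1q_complete tensmx11 castmx1.
Qed.

Lemma basis_expansion n (v : 'cV[C]_(2 ^ n)) :
  v = \sum_(b : n.-tuple bool) (adj (basis_ket b) *m v) 0 0 *: basis_ket b.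
Proof.
rewrite -{1}[v]mul1mx -basis_ket_complete mulmx_suml; apply: eq_bigr => b _.
by rewrite -mulmxA {1}(mx11_scalar (adj (basis_ket b) *m v)) mul_mx_scalar.
Qed.

Lemma basis_ket_inner n (b b' : n.-tuple bool) :
  adj (basis_ket b') *m basis_ket b = ((b' == b)%:R : C)%:M.
Proof.
rewrite /basis_ket tket_inner; congr (_%:M).
have [->|neq] := eqVneq b' b; first by rewrite big1 // => i _; rewrite eqxx.
have [i bi] : exists i : 'I_n, nth false b' i != nth false b i.
  apply/existsP; apply: contraR neq => /existsPn same.
  apply/eqP/val_inj/(@eq_from_nth _ false) => [|i]; first by rewrite !size_tuple.
  by rewrite size_tuple => i_lt; apply/eqP/negPn/(same (Ordinal i_lt)).
by rewrite (bigD1 i) //= (negbTE bi) mul0r.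
Qed.

Lemma Pw_basis_ket n t (b : n.-tuple bool) :
  Pw R n t *m basis_ket b = ((count id b == t)%:R : C) *: basis_ket b.
Proof.
rewrite /Pw mulmx_suml.
under eq_bigr => b' _ do rewrite -mulmxA -/(basis_ket b') basis_ket_inner mul_mx_scalar.
rewrite big_mkcond (bigD1 b) //= eqxx big1 ?addr0; first by case: eqP; rewrite ?scale1r ?scale0r.
by move=> b' /negbTE ->; case: ifP; rewrite ?scale0r.
Qed.

Lemma hadj_Pw n t : adj (Pw R n t) = Pw R n t.
Proof. by rewrite /Pw hadj_sum; apply: eq_bigr => b _; rewrite hadjM hadjK. Qed.

Lemma Sw_basis_ket n r (b : n.-tuple bool) :
  Sw R n r *m basis_ket b = (if count id b == r then -1 else 1) *: basis_ket b.
Proof. exact/reflection_eigen/Pw_basis_ket. Qed.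

End ComputationalBasis.

Section PhaseEstimation.
Variable R : realType.
Local Notation C := R[i].

Lemma hadj_mulmx_big_eigen N I (s : seq I) (I0 : 'M[C]_N) (F : I -> 'M[C]_N)
    (c : I -> C) (v : 'cV[C]_N) :
  adj I0 *m v = v -> (forall i, adj (F i) *m v = c i *: v) ->
  adj (\big[@mulmx C N N N / I0]_(i <- s) F i) *m v = (\prod_(i <- s) c i) *: v.
Proof.
move=> I0v Fv; elim: s => [|x s IH]; first by rewrite !big_nil scale1r.
by rewrite !big_cons hadjM -mulmxA Fv -scalemxAr IH scalerA.
Qed.

Definition weight_phase n (b : n.-tuple bool) (s : nat) : C :=
  expi (2 * pi * (count id b * s)%:R / n.+1%:R).

Lemma sum_Pw_basis_ket n (a : 'I_n.+1 -> C) (b : n.-tuple bool) :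
  (\sum_(t < n.+1) a t *: Pw R n t) *m basis_ket R b
  = a (Ordinal (count_tuple_lt b)) *: basis_ket R b.
Proof.
rewrite mulmx_suml; under eq_bigr => t _ do rewrite -scalemxAl Pw_basis_ket scalerA.
rewrite -scaler_suml (bigD1 (Ordinal (count_tuple_lt b))) //= eqxx mulr1 big1 ?addr0 // => t.
by rewrite eq_sym -val_eqE /= => /negbTE ->; rewrite mulr0.
Qed.

Lemma Us_basis_ket n s (b : n.-tuple bool) :
  Us R n s *m basis_ket R b = weight_phase b s *: basis_ket R b.
Proof. exact: sum_Pw_basis_ket. Qed.

Lemma hadj_Us_basis_ket n s (b : n.-tuple bool) :
  adj (Us R n s) *m basis_ket R b = (weight_phase b s)^*%C *: basis_ket R b.
Proof.
rewrite /Us hadj_sum; under eq_bigr => t _ do rewrite hadjZ hadj_Pw.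
exact: sum_Pw_basis_ket.
Qed.

Lemma weight_phase_bits k n (b : n.-tuple bool) y : (y < 2 ^ k)%N ->
  \prod_(m < k) (if odd (y %/ 2 ^ m) then weight_phase b (2 ^ m) else 1) = weight_phase b y.
Proof.
move=> y_lt; rewrite {2}(binary_expansion y_lt) /weight_phase big_distrr /= natr_sum.
rewrite mulr_sumr mulr_suml -prod_expi; apply: eq_bigr => m _.
by case: odd; rewrite ?mul1n // mul0n muln0 mulr0 mul0r expi0.
Qed.

Lemma ctrlproj_bin k m c y : (m < k)%N ->
  ctrlproj R k m c *m bin R k y = ((odd (y %/ 2 ^ m) == c)%:R : C) *: bin R k y.
Proof.
move=> m_lt; rewrite /ctrlproj /bin (@tprod_tket R k _ _ (fun l => odd (y %/ 2 ^ l))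
  (fun i => if i == m then ((odd (y %/ 2 ^ i) == c)%:R : C) else 1)) => [|i _].
  rewrite (bigD1 (Ordinal m_lt)) //= eqxx big1 ?mulr1 // => i.
  by rewrite -val_eqE /= => /negbTE ->.
case: eqP => [->|_]; last by rewrite /qI mul1mx scale1r.
by rewrite -mulmxA ket1q_inner mul_mx_scalar eq_sym; case: eqP => [->|_]; rewrite ?scale0r.
Qed.

Lemma hadj_ctrlproj k m c : adj (ctrlproj R k m c) = ctrlproj R k m c.
Proof.
rewrite /ctrlproj hadj_tprod; apply: eq_tprod => i.
by case: (i == m); rewrite ?hadjM ?hadjK // /qI hadj1.
Qed.

Lemma CU_bin_basis k n m y (b : n.-tuple bool) : (m < k)%N ->
  CU R k n m *m (bin R k y *t basis_ket R b) =
  (if odd (y %/ 2 ^ m) then weight_phase b (2 ^ m) else 1) *: (bin R k y *t basis_ket R b).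
Proof.
move=> m_lt; rewrite /CU mulmxDl !tensmx_mul !ctrlproj_bin // /idm mul1mx Us_basis_ket.
rewrite tensmxZl tensmxZr tensmxZl scalerA.
by case: odd; rewrite ?scale0r ?add0r ?mulr1 // mulr0 scale0r addr0.
Qed.

Lemma hadj_CU_bin_basis k n m y (b : n.-tuple bool) : (m < k)%N ->
  adj (CU R k n m) *m (bin R k y *t basis_ket R b) =
  (if odd (y %/ 2 ^ m) then (weight_phase b (2 ^ m))^*%C else 1) *: (bin R k y *t basis_ket R b).
Proof.
move=> m_lt; rewrite /CU hadjD !hadjT !hadj_ctrlproj mulmxDl !tensmx_mul !ctrlproj_bin //.
rewrite /idm hadj1 mul1mx hadj_Us_basis_ket tensmxZl tensmxZr tensmxZl scalerA.
by case: odd; rewrite ?scale0r ?add0r ?mulr1 // mulr0 scale0r addr0.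
Qed.

Lemma sigx_ket1q x : sigx R *m ket1q R x = ket1q R (~~ x).
Proof.
apply/matrixP=> i j; rewrite !ord1 !mxE big_ord_recl big_ord1 !mxE /bump /=.
by case: x; case: i => [[|[|i]] ?] //=; simpc.
Qed.

Lemma Xflip_tket k r (c : nat -> bool) :
  Xflip R k r *m tket R k c = tket R k (fun l => c l == odd (r %/ 2 ^ l)).
Proof.
rewrite /Xflip (@tprod_tket R k _ _ (fun l => c l == odd (r %/ 2 ^ l)) (fun _ => 1)) => [|i _].
  by rewrite big1 ?scale1r.
by case: odd; rewrite ?sigx_ket1q ?eqbF_neg ?eqb_id /qI ?mul1mx scale1r.
Qed.

Lemma XflipK k r : Xflip R k r *m Xflip R k r = 1%:M.
Proof.
rewrite /Xflip tprod_mul; apply: tprod_id => i; case: odd; first by rewrite /qI mul1mx.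
apply/matrixP=> a c; rewrite !mxE big_ord_recl big_ord1 !mxE /bump /=.
by case: a => [[|[|a]] ?] //=; case: c => [[|[|c]] ?] //=; simpc.
Qed.

Lemma hadj_Xflip k r : adj (Xflip R k r) = Xflip R k r.
Proof.
rewrite /Xflip hadj_tprod; apply: eq_tprod => i; case: odd; first exact: hadj1.
by apply/matrixP=> a c; rewrite !mxE; case: a => [[|[|a]] ?]; case: c => [[|[|c]] ?] //=; simpc.
Qed.

Lemma Xflip_ones k r : Xflip R k r *m tket R k (fun _ => true) = bin R k r.
Proof. by rewrite Xflip_tket; apply: eq_tket => l _. Qed.

Lemma Oop_reflection k r : Oop R k r = 1%:M - 2%:R *: (bin R k r *m adj (bin R k r)).
Proof.
rewrite /Oop /CZ /idm mulmxBr mulmx1 mulmxBl XflipK -scalemxAr -scalemxAl !mulmxA Xflip_ones.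
by rewrite -mulmxA -{1}(hadj_Xflip k r) -hadjM Xflip_ones.
Qed.

Lemma Oop_bin k r t : (t < 2 ^ k)%N -> (r < 2 ^ k)%N ->
  Oop R k r *m bin R k t = (if t == r then -1 else 1) *: bin R k t.
Proof.
move=> t_lt r_lt; rewrite Oop_reflection; apply: reflection_eigen.
rewrite -mulmxA bin_inner // mul_mx_scalar eq_sym.
by case: eqP => [->|_]; rewrite ?scale0r.
Qed.

Definition iqft_coef (N y z : nat) : C := rsqrtc R N * expi (- (2 * pi * (y * z)%:R / N%:R)).

Lemma iqft_coefJ N y z :
  (iqft_coef N y z)^*%C = rsqrtc R N * expi (2 * pi * (y * z)%:R / N%:R).
Proof.
have conjM (a b : C) : (a * b)^*%C = a^*%C * b^*%C by exact: rmorphM.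
by rewrite conjM expiJ opprK; congr (_ * _); rewrite /rsqrtc; simpc.
Qed.

Lemma iqft_phase_sum n (b : n.-tuple bool) z : (z < n.+1)%N ->
  \sum_(y < n.+1) rsqrtc R n.+1 * (weight_phase b y * iqft_coef n.+1 y z)
  = (z == count id b)%:R.
Proof.
move=> z_lt.
have term (y : 'I_n.+1) : rsqrtc R n.+1 * (weight_phase b y * iqft_coef n.+1 y z) =
    rsqrtc R n.+1 * rsqrtc R n.+1 * (expi (2 * pi * (count id b * y)%:R / n.+1%:R) *
    expi (- (2 * pi * (y * z)%:R / n.+1%:R))).
  by rewrite /weight_phase /iqft_coef; ring.
under eq_bigr do rewrite term.
rewrite -mulr_sumr sum_expi_orthogonal ?count_tuple_lt //.
by rewrite mulrCA rsqrtc_sqr // mulr1 eq_sym.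
Qed.

End PhaseEstimation.

Section Circuit.
Variable R : realType.
Local Notation C := R[i].
Variables k n : nat.
Hypothesis n1_pow2 : n.+1 = (2 ^ k)%N.

Lemma IQFT_bin y : (y < n.+1)%N ->
  IQFT R k n *m bin R k y = \sum_(z < n.+1) iqft_coef R n.+1 y z *: bin R k z.
Proof.
move=> y_lt; rewrite /IQFT mulmx_suml.
under eq_bigr => y' _ do (rewrite mulmx_suml; under eq_bigr => z _ do
  rewrite -scalemxAl -mulmxA bin_inner -?n1_pow2 // mul_mx_scalar scalerA mulrC -scalerA).
under eq_bigr => y' _ do rewrite -scaler_sumr.
exact: (sum_ord_delta (fun y' => \sum_(z < n.+1) iqft_coef R n.+1 y' z *: bin R k z)).
Qed.

Lemma hadj_IQFT_bin t : (t < n.+1)%N ->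
  adj (IQFT R k n) *m bin R k t = \sum_(y < n.+1) (iqft_coef R n.+1 y t)^*%C *: bin R k y.
Proof.
move=> t_lt; rewrite /IQFT hadj_sum mulmx_suml; apply: eq_bigr => y _.
rewrite hadj_sum mulmx_suml.
under eq_bigr => z _ do rewrite hadjZ hadjM hadjK -scalemxAl -mulmxA bin_inner -?n1_pow2 //
  mul_mx_scalar scalerA mulrC -scalerA.
exact: (sum_ord_delta (fun z => (iqft_coef R n.+1 y z)^*%C *: bin R k y)).
Qed.

Definition phase_layer : 'M[C]_(2 ^ k * 2 ^ n) :=
  \big[@mulmx C _ _ _ / idm R k *t idm R n]_(m < k) CU R k n m.

Lemma phase_layer_bin_basis (y : 'I_n.+1) (b : n.-tuple bool) :
  phase_layer *m (bin R k y *t basis_ket R b) = weight_phase R b y *: (bin R k y *t basis_ket R b).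
Proof.
rewrite (@mulmx_big_eigen _ _ _ _ _ _ (fun m : 'I_k =>
  if odd (y %/ 2 ^ m) then weight_phase R b (2 ^ m) else 1)) => [|| m].
- by rewrite weight_phase_bits // -n1_pow2.
- by rewrite /idm tensmx11 mul1mx.
- exact: CU_bin_basis.
Qed.

Lemma hadj_phase_layer_bin_basis (y : 'I_n.+1) (b : n.-tuple bool) :
  adj phase_layer *m (bin R k y *t basis_ket R b)
  = (weight_phase R b y)^*%C *: (bin R k y *t basis_ket R b).
Proof.
rewrite (@hadj_mulmx_big_eigen _ _ _ _ _ _ (fun m : 'I_k =>
  if odd (y %/ 2 ^ m) then (weight_phase R b (2 ^ m))^*%C else 1)) => [|| m].
- rewrite -(@weight_phase_bits R k _ b y) -?n1_pow2 // rmorph_prod.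
  by congr (_ *: _); apply: eq_bigr => m _; case: odd; rewrite ?rmorph1.
- by rewrite /idm hadjT !hadj1 tensmx11 mul1mx.
- exact: hadj_CU_bin_basis.
Qed.

Lemma hadamard_layer_vac (v : 'cV[C]_(2 ^ n)) :
  (tprod k (fun _ => hadamard R) *t idm R n) *m (vac R k *t v)
  = rsqrtc R n.+1 *: \sum_(y < n.+1) bin R k y *t v.
Proof.
by rewrite tensmx_mul tprod_hadamard_vac /idm mul1mx tensmxZl tensmx_suml n1_pow2.
Qed.

Lemma Vop_vac_basis (b : n.-tuple bool) :
  Vop R k n *m (vac R k *t basis_ket R b) = bin R k (count id b) *t basis_ket R b.
Proof.
rewrite /Vop -/phase_layer -!mulmxA hadamard_layer_vac -!scalemxAr !mulmx_sumr.
under eq_bigr => y _ do (rewrite phase_layer_bin_basis -scalemxAr tensmx_mul IQFT_bin //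
  /idm mul1mx tensmx_suml scaler_sumr; under eq_bigr => z _ do rewrite tensmxZl !scalerA).
rewrite scaler_sumr; under eq_bigr => y _ do
  (rewrite scaler_sumr; under eq_bigr => z _ do rewrite scalerA).
rewrite exchange_big /=; under eq_bigr => z _ do rewrite -scaler_suml iqft_phase_sum //.
exact: (sum_ord_delta (fun z => bin R k z *t basis_ket R b) (count_tuple_lt b)).
Qed.

Lemma hadj_Vop_bin_basis (b : n.-tuple bool) :
  adj (Vop R k n) *m (bin R k (count id b) *t basis_ket R b) = vac R k *t basis_ket R b.
Proof.
rewrite /Vop -/phase_layer !hadjM -!mulmxA.
have fourier : adj (IQFT R k n *t idm R n) *m (bin R k (count id b) *t basis_ket R b) =
    \sum_(y < n.+1) (iqft_coef R n.+1 y (count id b))^*%C *: (bin R k y *t basis_ket R b).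
  rewrite hadjT /idm hadj1 tensmx_mul hadj_IQFT_bin ?count_tuple_lt // mul1mx tensmx_suml.
  by apply: eq_bigr => y _; rewrite tensmxZl.
have phases_cancel (y : 'I_n.+1) :
    (iqft_coef R n.+1 y (count id b))^*%C * (weight_phase R b y)^*%C = rsqrtc R n.+1.
  by rewrite iqft_coefJ /weight_phase expiJ mulnC -mulrA expiNK mulr1.
rewrite fourier mulmx_sumr.
under eq_bigr => y _ do rewrite -scalemxAr hadj_phase_layer_bin_basis scalerA phases_cancel.
rewrite -scaler_sumr -hadamard_layer_vac mulmxA hadjT hadj_tprod tensmx_mul.
rewrite tprod_mul tprod_id => [|i]; last by rewrite hadj_hadamard hadamardK.
by rewrite /idm hadj1 mul1mx tensmx11 mul1mx.
Qed.

Lemma phase_reflection r (v : 'cV[C]_(2 ^ n)) : (r < 2 ^ k)%N ->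
  adj (Vop R k n) *m ((Oop R k r *t idm R n) *m (Vop R k n *m (vac R k *t v)))
  = vac R k *t (Sw R n r *m v).
Proof.
move=> r_lt; rewrite (basis_expansion v) !tensmx_sumr !mulmx_sumr tensmx_sumr.
apply: eq_bigr => b _; rewrite !tensmxZr -!scalemxAr tensmxZr; congr (_ *: _).
have count_lt : (count id b < 2 ^ k)%N by rewrite -n1_pow2 count_tuple_lt.
rewrite Vop_vac_basis tensmx_mul Oop_bin // /idm mul1mx tensmxZl -scalemxAr.
by rewrite hadj_Vop_bin_basis Sw_basis_ket tensmxZr.
Qed.

End Circuit.

Theorem mainTheorem4 (R : realType) (k n r : nat) (X : 'M[R]_(n, r)) :
  (1 <= k)%N -> n = (2 ^ k - 1)%N -> (1 <= r)%N -> (r < n)%N ->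
  (forall j : 'I_r, \sum_(i < n) X i j ^+ 2 = 1) ->
  \rank X = r ->
  Cop k X *m (vac R k *t columns X) = vac R k *t (Qop X *m columns X).
Proof.
move=> k_gt0 n_def _ r_lt_n _ _.
have n1_pow2 : n.+1 = (2 ^ k)%N by rewrite n_def subn1 prednK // expn_gt0.
have r_lt : (r < 2 ^ k)%N by rewrite -n1_pow2 ltnS ltnW.
(* Exactly five reassociations: a sixth one would enter [Vop]. *)
rewrite /Cop /Qop mulNmx -5!mulmxA phase_reflection //.
by rewrite !tensmx_mul /idm !mul1mx mulNmx tensmxNr -!mulmxA.
Qed.
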